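(* Let $\mathcal G$ be a temporal graph with vertex set $V$, $|V|=n$, and all labels in $\{1,\dots,\tau\}$, considered with non-strict journeys. Then there exists a temporal graph $\mathcal H$ with the same vertex set $V$, all labels in $\{1,\dots,\tau\}$, and at most $n(n+1)\tau/2$ contacts, such that for all $u,v\in V$ there is a non-strict journey from $u$ to $v$ in $\mathcal G$ if and only if there is a strict journey from $u$ to $v$ in $\mathcal H$. In particular, the non-strict reachability graph of $\mathcal G$ equals the strict reachability graph of $\mathcal H$.
   Context: A temporal graph is a triple $\mathcal G=(V,E,\lambda)$ where $V$ is a finite vertex set, $E$ is a set of undirected edges on $V$, and $\lambda:E\to 2^{\mathbb N}\setminus\{\emptyset\}$ assigns to each edge a nonempty set of presence times. The footprint of $\mathcal G$ is the static graph $(V,E)$. A contact is a pair $(e,t)$ with $e\in E$ and $t\in\lambda(e)$. A journey from $u$ to $v$ is a sequence of contacts $(e_1,t_1),\dots,(e_k,t_k)$, $k\ge 1$, such that $e_1,\dots,e_k$ form a path from $u$ to $v$ in the footprint and $t_1\le t_2\le\dots\le t_k$ (a non-strict journey); it is strict if $t_1<t_2<\dots<t_k$. The reachability graph (with respect to a chosen journey notion) is the directed graph on $V$ having an arc $(u,v)$, $u\neq v$, if and only if there is a journey from $u$ to $v$. *)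

From mathcomp Require Import all_boot.
Set Implicit Arguments. Unset Strict Implicit. Unset Printing Implicit Defensive.

(* A temporal graph on a finite vertex type V: an edge set E of undirected
   edges (2-element subsets of V) and a labelling lam : edge -> (set of times),
   a time set being given as a predicate on nat. *)
Record tgraph (V : finType) := TGraph {
  tE : {set {set V}};
  tlam : {set V} -> nat -> bool
}.

Definition tgraph_wf (V : finType) (G : tgraph V) : Prop :=
  forall e, e \in tE G -> #|e| = 2 /\ exists t, tlam G e t.

Definition labels_in (V : finType) (G : tgraph V) (tau : nat) : Prop :=
  forall e t, e \in tE G -> tlam G e t -> 1 <= t <= tau.

(* Number of contacts (e,t), e in E, t in lam e, counting times t <= tau
   (this is the exact number of contacts when labels_in G tau holds). *)
Definition ncontacts (V : finType) (G : tgraph V) (tau : nat) : nat :=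
  \sum_(e in tE G) #|[set t : 'I_tau.+1 | tlam G e t]|.

(* A journey from u to v: a nonempty sequence of contacts
   ({x_0,x_1},t_1),...,({x_{k-1},x_k},t_k), encoded as the list
   [(x_1,t_1);...;(x_k,t_k)] with x_0 = u, x_k = v, the x_i pairwise distinct
   (a path in the footprint), each {x_{i-1},x_i} in E with t_i in lam, and
   times non-decreasing (non-strict) or increasing (strict). *)
Definition journey (V : finType) (G : tgraph V) (strict : bool) (u v : V) : Prop :=
  exists s : seq (V * nat),
    [/\ s != [::],
        uniq (u :: map fst s),
        last u (map fst s) = v,
        path (fun a b : V * nat =>
                ([set a.1; b.1] \in tE G) && tlam G [set a.1; b.1] b.2)
             (u, 0) s
      & sorted (fun a b : nat => if strict then a < b else a <= b) (map snd s)].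

Definition reach_arc (V : finType) (G : tgraph V) (strict : bool) (u v : V) : Prop :=
  u <> v /\ journey G strict u v.

From mathcomp Require Import all_boot.
Set Implicit Arguments. Unset Strict Implicit. Unset Printing Implicit Defensive.

(* Let H have, at each time t in 1..tau, an edge between any two distinct
   vertices of the same connected component of the snapshot of G at time t.
   A non-strict walk of G splits into maximal blocks of equal time; each block
   stays in one component of its snapshot, so it collapses to one contact of H,
   and the block times increase strictly.  Conversely a contact of H at time t
   unfolds into a path of the snapshot at time t.  Repeated vertices created by
   either translation are cut out afterwards, and H has at most 'C(n, 2) edges,
   each carrying at most tau labels. *)

Section TemporalWalks.

Variable V : finType.

Definition step (E : nat -> rel V) : rel (V * nat) := fun a b => E b.2 a.1 b.1.

Definition walk (E : nat -> rel V) (u : V) (s : seq (V * nat)) : bool :=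
  path (step E) (u, 0) s.

Definition time_order (strict : bool) : rel nat :=
  fun a b => if strict then a < b else a <= b.

Definition reachable (E : nat -> rel V) (strict : bool) (u v : V) : Prop :=
  exists s, [/\ walk E u s, last u (map fst s) = v
              & sorted (time_order strict) (map snd s)].

Definition proper (K : nat -> rel V) (t : nat) : rel V :=
  fun x y => (x != y) && K t x y.

Lemma time_order_trans strict : transitive (time_order strict).
Proof. by case: strict; [exact: ltn_trans | exact: leq_trans]. Qed.

Lemma path_step_fst E a b s : a.1 = b.1 -> path (step E) a s = path (step E) b s.
Proof. by case: s => //= c s; rewrite /step => ->. Qed.

Lemma walk_cons E u a s : walk E u (a :: s) = E a.2 u a.1 && walk E a.1 s.
Proof. by rewrite /walk /= (@path_step_fst _ a (a.1, 0)). Qed.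

Lemma walk_cat E u p q :
  walk E u (p ++ q) = walk E u p && walk E (last u (map fst p)) q.
Proof.
rewrite /walk cat_path; congr andb; apply: path_step_fst.
by rewrite -(last_map fst).
Qed.

Lemma walk_at E t u p : walk E u [seq (z, t) | z <- p] = path (E t) u p.
Proof. by elim: p u => //= z p IH u; rewrite walk_cons IH. Qed.

Lemma eq_walk E F : (forall t, E t =2 F t) -> walk E =2 walk F.
Proof. by move=> eEF u s; apply: eq_path => a b; apply: eEF. Qed.

Lemma walk_shorten E u s : walk E u s ->
  exists s', [/\ walk E u s', uniq (u :: map fst s'),
                 last u (map fst s') = last u (map fst s) & subseq s' s].
Proof.
elim: s u => [|a s IH] u; first by exists [::].
rewrite walk_cons => /andP [Eua /IH [s' [ws' uq' ls' ss']]].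
have wa : walk E u (a :: s') by rewrite walk_cons Eua.
have uqa : uniq (map fst (a :: s')) := uq'.
have la w : last w (map fst (a :: s')) = last w (map fst (a :: s)) := ls'.
have sa : subseq (a :: s') (a :: s) by rewrite /= eqxx.
have [/mapP [c cin uc] | uNin] := boolP (u \in map fst (a :: s')); last first.
  by exists (a :: s'); split; rewrite //= uNin.
(* A repeated visit of [u]: restart the walk from that visit. *)
case/splitPr: cin uc wa uqa la sa => p1 p2 ->.
rewrite walk_cat walk_cons map_cat => /and3P [_ _ wp2] uqa la sa.
exists p2; split=> //.
- by move: uqa; rewrite cat_uniq => /and3P [].
- by rewrite -la last_cat.
- by apply: subseq_trans sa; rewrite -cat_rcons suffix_subseq.
Qed.

Lemma path_leq_nseq t0 t k l :
  t0 <= t -> path leq t l -> path leq t0 (nseq k t ++ l).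
Proof.
elim: k t0 => [|k IH] t0 le_t0t ptl /=; first exact: (path_le leq_trans le_t0t ptl).
by rewrite le_t0t IH.
Qed.

Lemma walk_expand (E F : nat -> rel V) :
  (forall t, subrel (F t) (connect (E t))) ->
  forall t0 u s, walk F u s -> path leq t0 (map snd s) ->
  exists s', [/\ walk E u s', last u (map fst s') = last u (map fst s)
               & path leq t0 (map snd s')].
Proof.
move=> FE t0 u s; elim: s t0 u => [|a s IH] t0 u; first by exists [::].
rewrite walk_cons /= => /andP [/FE /connectP [p pu la] ws] /andP [le0a pa].
have [s' [ws' ls' ps']] := IH _ _ ws pa.
exists ([seq (z, a.2) | z <- p] ++ s'); split.
- have fp : map fst [seq (z, a.2) | z <- p] = p by elim: (p) => //= z q ->.
  by rewrite walk_cat walk_at pu fp -la.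
- by rewrite map_cat last_cat -map_comp map_id -la.
- have tp : map snd [seq (z, a.2) | z <- p] = nseq (size p) a.2.
    by elim: (p) => //= z q ->.
  by rewrite map_cat tp path_leq_nseq.
Qed.

Section Contract.

Variable K : nat -> rel V.
Hypothesis K_trans : forall t, transitive (K t).

(* A step at time [t] from [u] to [x] is absorbed into the strict walk from
   [x] when the latter also starts at time [t]: both fuse into one [K t]-step. *)
Lemma walk_merge t u x s :
  K t u x -> walk (proper K) x s -> path leq t (map snd s) ->
  sorted ltn (map snd s) ->
  exists s', [/\ walk (proper K) u s', last u (map fst s') = last x (map fst s),
                 path leq t (map snd s') & sorted ltn (map snd s')].
Proof.
move=> Kux ws ps ss; have [-> | ux] := eqVneq u x; first by exists s; split.
have Pux : proper K t u x by rewrite /proper ux.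
case: s ws ps ss => [|c s] ws ps ss.
  by exists [:: (x, t)]; split; rewrite //= ?walk_cons ?Pux ?leqnn.
move: ws ps ss; rewrite walk_cons /= => /andP [Pxc ws] /andP [le_tc pc] sc.
have [ct | ct] := eqVneq c.2 t; last first.
  exists ((x, t) :: c :: s); split=> //=.
  - by rewrite !walk_cons Pux Pxc.
  - by rewrite leqnn le_tc.
  - by rewrite ltn_neqAle eq_sym ct le_tc.
move: Pxc pc sc; rewrite ct => /andP [_ Kxc] pc sc; have Kuc := K_trans Kux Kxc.
have [uc | uc] := eqVneq u c.1.
  by exists s; split; rewrite // ?uc // (path_sorted sc).
by exists ((c.1, t) :: s); split; rewrite //= ?walk_cons /proper ?uc ?Kuc ?leqnn.
Qed.

Lemma walk_contract (E : nat -> rel V) :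
  (forall t, subrel (E t) (K t)) ->
  forall t0 u s, walk E u s -> path leq t0 (map snd s) ->
  exists s', [/\ walk (proper K) u s', last u (map fst s') = last u (map fst s),
                 path leq t0 (map snd s') & sorted ltn (map snd s')].
Proof.
move=> EK t0 u s; elim: s t0 u => [|a s IH] t0 u; first by exists [::].
rewrite walk_cons /= => /andP [/EK Kua ws] /andP [le0a pa].
have [s' [ws' ls' ps' ss']] := IH _ _ ws pa.
have [s'' [ws'' ls'' ps'' ss'']] := walk_merge Kua ws' ps' ss'.
by exists s''; split; rewrite // ?ls'' // (path_le leq_trans le0a).
Qed.

End Contract.

Lemma path_leq0 l : path leq 0 l = sorted leq l.
Proof. by case: l. Qed.

Lemma reachable_contract E u v :
  reachable E false u v -> reachable (proper (fun t => connect (E t))) true u v.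
Proof.
case=> s [ws <- ss]; have ps : path leq 0 (map snd s) by rewrite path_leq0.
have [s' [ws' ls' _ ss']] := walk_contract (fun t => @connect_trans _ (E t))
  (fun t => @connect1 _ (E t)) ws ps.
by exists s'.
Qed.

Lemma reachable_expand E F strict u v :
  (forall t, subrel (F t) (connect (E t))) ->
  reachable F strict u v -> reachable E false u v.
Proof.
move=> FE [s [ws <- ss]].
have ss' : path leq 0 (map snd s).
  by rewrite path_leq0; apply: sub_sorted ss; case: strict => // a b /ltnW.
by have [s' [ws' ls' ps']] := walk_expand FE ws ss'; exists s'; rewrite -path_leq0.
Qed.

Definition snapshot (G : tgraph V) (t : nat) : rel V :=
  fun x y => ([set x; y] \in tE G) && tlam G [set x; y] t.

Lemma snapshot_sym (G : tgraph V) t : symmetric (snapshot G t).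
Proof. by move=> x y; rewrite /snapshot setUC. Qed.

Lemma journeyP (G : tgraph V) strict u v :
  journey G strict u v <-> u != v /\ reachable (snapshot G) strict u v.
Proof.
split=> [[s [nes uq ls ws ss]] | [uv [s [ws ls ss]]]].
  split; last by exists s.
  case: s nes uq ls {ws ss} => // a s _ /= /andP [uNin _] <-.
  by apply: contraNneq uNin => ->; apply: mem_last.
have [s' [ws' uq' ls' ss']] := walk_shorten ws.
exists s'; split=> //; first by apply: contraNneq uv => s'0; rewrite -ls -ls' s'0.
- by rewrite ls' ls.
- exact: (subseq_sorted (@time_order_trans strict) (map_subseq snd ss') ss).
Qed.

Lemma ncontacts_le_edges (G : tgraph V) tau :
  labels_in G tau -> ncontacts G tau <= #|tE G| * tau.
Proof.
move=> lab; rewrite /ncontacts -sum_nat_const; apply: leq_sum => e eE.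
have sub : [set t : 'I_tau.+1 | tlam G e t] \subset [set~ ord0].
  apply/subsetP => t; rewrite !inE => /(lab _ _ eE) /andP [t_gt0 _].
  by rewrite -val_eqE /= -lt0n.
by rewrite (leq_trans (subset_leq_card sub)) // cardsC1 card_ord.
Qed.

Lemma card_edges_le_bin2 (G : tgraph V) : tgraph_wf G -> #|tE G| <= 'C(#|V|, 2).
Proof.
move=> wf; rewrite -card_draws subset_leq_card //.
by apply/subsetP => e /wf [e2 _]; rewrite inE e2.
Qed.

Lemma bin2_mul_le n tau : 'C(n, 2) * tau <= n * (n + 1) * tau %/ 2.
Proof.
have bin2E : 'C(n, 2) * 2 = n * n.-1.
  by rewrite -[X in _ * X]/(2`!) bin_ffact ffactnS ffactn1.
rewrite leq_divRL // mulnAC bin2E leq_mul2r leq_mul2l.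
by rewrite addn1 (leq_trans (leq_pred n)) ?orbT.
Qed.

Definition closure_lam (G : tgraph V) (tau : nat) (e : {set V}) (t : nat) : bool :=
  [&& 1 <= t <= tau, #|e| == 2 &
      [forall x in e, forall y in e, connect (snapshot G t) x y]].

Definition closure_tgraph (G : tgraph V) (tau : nat) : tgraph V :=
  TGraph [set e | [exists t : 'I_tau.+1, closure_lam G tau e t]] (closure_lam G tau).

Lemma closure_wf (G : tgraph V) tau : tgraph_wf (closure_tgraph G tau).
Proof.
move=> e; rewrite inE => /existsP [t lam]; split; last by exists t.
by case/and3P: lam => _ /eqP.
Qed.

Lemma closure_labels (G : tgraph V) tau : labels_in (closure_tgraph G tau) tau.
Proof. by move=> e t _ /andP []. Qed.

Lemma connect_snapshot_label (G : tgraph V) tau t x y : labels_in G tau ->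
  x != y -> connect (snapshot G t) x y -> 1 <= t <= tau.
Proof.
move=> lab xy /connectP [[|z p] /= xzp lp]; first by rewrite lp eqxx in xy.
by case/andP: xzp => /andP [xzE xzt] _; apply: lab xzE xzt.
Qed.

Lemma snapshot_closure (G : tgraph V) tau t x y : labels_in G tau ->
  snapshot (closure_tgraph G tau) t x y = proper (fun t => connect (snapshot G t)) t x y.
Proof.
move=> lab; set C := connect (snapshot G t).
have Csym : connect_sym (snapshot G t) := sym_connect_sym (snapshot_sym G t).
have pairE : [forall a in [set x; y], forall b in [set x; y], C a b] = C x y.
  apply/forall_inP/idP => [all2 | Cxy a /set2P [] -> ].
  - exact: (forall_inP (all2 x (set21 x y))) y (set22 x y).
  - by apply/forall_inP => b /set2P [] ->; rewrite /C ?connect0.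
  - by apply/forall_inP => b /set2P [] ->; rewrite /C ?connect0 // Csym.
have lamE : closure_lam G tau [set x; y] t = (x != y) && C x y.
  rewrite /closure_lam cards2 eqSS eqb1 pairE.
  apply/idP/idP => [/and3P [_ -> ->] // | /andP [xy Cxy]].
  by rewrite (connect_snapshot_label lab xy Cxy) xy.
rewrite /snapshot /= lamE inE andb_idl // => /andP [xy Cxy].
have /andP [_ le_t] := connect_snapshot_label lab xy Cxy.
by apply/existsP; exists (Ordinal (leq_ltn_trans le_t (ltnSn _))); rewrite lamE xy.
Qed.

End TemporalWalks.

Theorem mainTheorem10 (V : finType) (tau : nat) (G : tgraph V) :
  tgraph_wf G -> labels_in G tau ->
  exists H : tgraph V,
    [/\ tgraph_wf H, labels_in H tau,
        ncontacts H tau <= (#|V| * (#|V| + 1) * tau) %/ 2,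
        (forall u v : V, journey G false u v <-> journey H true u v)
      & (forall u v : V, reach_arc G false u v <-> reach_arc H true u v)].
Proof.
move=> _ lab; set H := closure_tgraph G tau.
have reachE u v : reachable (snapshot G) false u v <-> reachable (snapshot H) true u v.
  have HE := snapshot_closure (tau := tau) _ _ _ lab.
  split=> [/reachable_contract [s [ws ls ss]] | /reachable_expand]; last first.
    by apply=> t x y; rewrite HE => /andP [].
  by exists s; split; rewrite // (eq_walk HE).
have journeyE u v : journey G false u v <-> journey H true u v.
  by split=> /journeyP [uv /reachE r]; apply/journeyP.
exists H; split.
- exact: closure_wf.
- exact: closure_labels.
- apply: leq_trans (ncontacts_le_edges (@closure_labels _ G tau)) _.
  apply: leq_trans (bin2_mul_le _ tau).
  by rewrite leq_mul2r card_edges_le_bin2 ?orbT //; apply: closure_wf.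
- exact: journeyE.
- by move=> u v; split=> -[uv /journeyE j].
Qed.
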